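(* Let $p$ be a positive integer, $H$ a graph, $T$ a complete rooted ternary tree and $V\subseteq V(T(H))$. Let $T_1,\dots,T_q$ be a minimal sequence of largest subtrees of $T$ with respect to $V$ lacking $p$, with corresponding sequence of sets $V_1,\dots,V_q$. Then $|OC(T_q,V_q)|\geq (|OC(T_1,V_1)|-p)/3$.
   Context: Complete rooted ternary tree: rooted tree, all root-leaf paths of equal length, every non-leaf vertex has exactly 3 children. Graph $T(H)$: for $V(H)=\{1,\dots,m\}$, vertices $v^i$ ($v\in V(T)$), each $\{v^1,\dots,v^m\}$ spanning a copy $H^v$ of $H$, plus edges $u^iv^i$ for $uv\in E(T)$; for a subtree $T'$, $T'(H)$ is the subgraph induced by the copies $H^v$, $v\in V(T')$. $OC(T,V)=\{u\in V(T): V(H^u)\cap V\neq\emptyset\}$. An immediate subtree of $T$ consists of a child of the root and all its descendants; it is largest w.r.t. $V$ if $|OC(T,V)\cap V(T')|$ is maximum among immediate subtrees. A sequence of largest subtrees: $T_1=T$, $V_1=V$, $T_{i+1}$ a largest immediate subtree of $T_i$ w.r.t. $V_i$, $V_{i+1}=V_i\cap V(T_{i+1}(H))$; $V_1,\dots,V_q$ is the corresponding sequence of sets. It is minimal lacking $p$ if $|OC(T_1,V_1)|-|OC(T_q,V_q)|\geq p$ and $|OC(T_1,V_1)|-|OC(T_{q-1},V_{q-1})|<p$. *)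

From HB Require Import structures.
From mathcomp Require Import all_boot all_order all_algebra.
From mathcomp Require Import finmap.
Set Implicit Arguments. Unset Strict Implicit. Unset Printing Implicit Defensive.
Local Open Scope fset_scope.

(* Complete rooted ternary tree T of depth d: its vertices are the sequences
   s : seq 'I_3 with size s <= d (the path of child choices from the root);
   the root is [::], the children of s (if size s < d) are rcons s c, and the
   subtree rooted at s consists of the vertices having s as a prefix.
   H is a graph on V(H) = 'I_m (= {1..m}); a vertex v^i of T(H) is the pair
   (v, i). *)

Definition tvert := seq 'I_3.
Definition thvert (m : nat) := (tvert * 'I_m)%type.

Definition in_subtreeH (m : nat) (s : tvert) (x : thvert m) : bool :=
  prefix s x.1.

(* OC(T', W) for the subtree T' rooted at s:
   the vertices u of T' whose copy H^u meets W. *)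
Definition OC (m : nat) (s : tvert) (W : {fset thvert m}) : {fset tvert} :=
  [fset x.1 | x in W & prefix s x.1].

(* Since OC(T',W) only contains vertices
   of T', |OC(T_s,W) ∩ V(T_{s c})| = |OC(T_{s c}, W)|. *)
Definition largest_immediate (d m : nat) (s : tvert) (W : {fset thvert m})
    (t : tvert) : Prop :=
  size s < d /\
  exists c : 'I_3, t = rcons s c /\
    forall c' : 'I_3, #|` OC (rcons s c') W| <= #|` OC t W|.

(* r 1, ..., r q are the roots of T_1, ..., T_q and Vs 1, ..., Vs q the
   corresponding sets V_1, ..., V_q. *)
Definition largest_subtree_seq (d m : nat) (V : {fset thvert m}) (q : nat)
    (r : nat -> tvert) (Vs : nat -> {fset thvert m}) : Prop :=
  1 <= q /\ r 1 = [::] /\ Vs 1 = V /\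
  forall i, 1 <= i < q ->
    largest_immediate d (r i) (Vs i) (r i.+1) /\
    Vs i.+1 = [fset x in Vs i | in_subtreeH (r i.+1) x].

Definition minimal_lacking (m : nat) (p q : nat) (r : nat -> tvert)
    (Vs : nat -> {fset thvert m}) : Prop :=
  2 <= q /\
  (p%:R <= (#|` OC (r 1%N) (Vs 1%N)|)%:R - (#|` OC (r q) (Vs q)|)%:R :> rat)%R /\
  ((#|` OC (r 1%N) (Vs 1%N)|)%:R - (#|` OC (r q.-1) (Vs q.-1)|)%:R < p%:R :> rat)%R.

From HB Require Import structures.
From mathcomp Require Import all_boot all_order all_algebra.
From mathcomp Require Import finmap zify.
Set Implicit Arguments. Unset Strict Implicit. Unset Printing Implicit Defensive.
Local Open Scope fset_scope.
Import GRing.Theory Num.Theory.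

(* The copies of H met by V inside a subtree are the root together with those
   met inside its three immediate subtrees, so the last step of the sequence
   shrinks |OC| by at most a factor 3 (plus the root): |OC(T_{q-1}, V_{q-1})|
   <= 1 + 3 |OC(T_q, V_q)|.  Minimality gives |OC(T_1, V_1)| -
   |OC(T_{q-1}, V_{q-1})| <= p - 1, and the two bounds combine. *)

Lemma leq_card_bigfcup (I : finType) (T : choiceType) (F : I -> {fset T}) :
  #|` \bigcup_(i | true) F i| <= \sum_i #|` F i|.
Proof.
elim/big_rec2: _ => [|i n U _ leUn]; first by rewrite cardfs0.
by rewrite (leq_trans (leq_card_fsetU _ _).1) ?leq_add2l.
Qed.

Lemma prefix_rcons_neq (T : eqType) (s x : seq T) :
  prefix s x -> x != s -> exists c, prefix (rcons s c) x.
Proof.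
move=> /prefixP [[|c t] ->]; first by rewrite cats0 eqxx.
by exists c; rewrite -cat_rcons prefix_prefix.
Qed.

Section OccupiedCopies.

Variables (m : nat) (W : {fset thvert m}).

Lemma OC_sub_children (s : tvert) :
  OC s W `<=` s |` \bigcup_(c | true) OC (rcons s c) W.
Proof.
apply/fsubsetP => _ /imfsetP [x /= /andP [xW sx] ->].
have [->|x1_neq_s] := eqVneq x.1 s; first by rewrite fsetU11.
have [c scx] := prefix_rcons_neq sx x1_neq_s.
rewrite inE; apply/orP; right; apply/bigfcupP.
exists c; first by rewrite mem_index_enum.
by apply/imfsetP; exists x => //=; rewrite inE xW.
Qed.

Lemma card_OC_le_children (s t : tvert) :
  (forall c : 'I_3, #|` OC (rcons s c) W| <= #|` OC t W|) ->
  #|` OC s W| <= 1 + 3 * #|` OC t W|.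
Proof.
move=> t_largest.
apply: (leq_trans (fsubset_leq_card (OC_sub_children s))).
apply: (leq_trans (leq_card_fsetU _ _).1); rewrite cardfs1 leq_add2l.
apply: (leq_trans (leq_card_bigfcup _)).
apply: (@leq_trans (\sum_(c : 'I_3) #|` OC t W|)); first exact: leq_sum.
by rewrite sum_nat_const card_ord mulnC.
Qed.

Lemma OC_restrict_subtree (t : tvert) :
  OC t [fset x in W | in_subtreeH t x] = OC t W.
Proof.
apply/fsetP => u; apply/imfsetP/imfsetP => -[x /=]; rewrite !inE.
- by case/andP => /andP [xW _] tx ->; exists x; rewrite //= inE xW.
- by case/andP => xW tx ->; exists x; rewrite //= !inE xW /in_subtreeH tx.
Qed.

End OccupiedCopies.

Lemma card_OC_largest_step (d m : nat) (s t : tvert) (W : {fset thvert m}) :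
  largest_immediate d s W t ->
  #|` OC s W| <= 1 + 3 * #|` OC t [fset x in W | in_subtreeH t x]|.
Proof.
by case=> _ [c [_ t_largest]]; rewrite OC_restrict_subtree card_OC_le_children.
Qed.

Theorem lemma5 (p : nat) (m : nat) (H : rel 'I_m) (d : nat)
    (V : {fset thvert m})
    (HV : forall x, x \in V -> size x.1 <= d)
    (q : nat) (r : nat -> tvert) (Vs : nat -> {fset thvert m}) :
  0 < p ->
  largest_subtree_seq d V q r Vs ->
  minimal_lacking p q r Vs ->
  (((#|` OC (r 1%N) (Vs 1%N)|)%:R - p%:R) / 3%:R <= (#|` OC (r q) (Vs q)|)%:R
     :> rat)%R.
Proof.
move=> _ [_ [_ [_ steps]]] [q_ge2 [_ before_last_lt]].
have q_pred : q.-1.+1 = q by lia.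
have [last_step Vs_last] : largest_immediate d (r q.-1) (Vs q.-1) (r q.-1.+1) /\
    Vs q.-1.+1 = [fset x in Vs q.-1 | in_subtreeH (r q.-1.+1) x].
  by apply: steps; lia.
rewrite q_pred in last_step Vs_last.
have := card_OC_largest_step last_step; rewrite -Vs_last.
move: before_last_lt; rewrite ltrBlDr -natrD ltr_nat.
move=> first_lt_pred pred_le_last.
rewrite ler_pdivrMr ?ltr0n // lerBlDr -natrM -natrD ler_nat; lia.
Qed.
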